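(* For any suitable parameters $(m,q,d,\tau)$, the shifted projection protocol $\Pi$ is informative: for every terminal execution $(H,\rho)$ of $\Pi$ and every agent $P$, there is no execution $(H',\rho)$ of $\Pi$ with $H'\ne H$ and $H'_P=H_P$.
   Context: Agents $\mathcal A=\{A,B_1,\dots,B_m\}$ speak in the order $A,B_1,\dots,B_m$. A distribution type is a vector $\tau=(\tau_P)_{P\in\mathcal A}$ of positive integers, $|\tau|=\sum_P\tau_P$; the deck $\Omega$ has $|\tau|$ cards; a deal of type $\tau$ is a partition $H=(H_P)_P$ of $\Omega$ with $|H_P|=\tau_P$. Suitable parameters: $m>1$, $q>m$ a prime power, $d>0$, $|\tau|=q^{d+1}$, $\tau_A=q^{d+1}-q^d$, $\tau_{B_k}>q^{d-1}$ for each $k\in[1,m]$. A transversal hyperplane $V\subseteq\mathbb F_q^{d+1}$ is $\{x: x_{d+1}=a_1x_1+\dots+a_dx_d+b\}$; $\sigma(V)=(a_1,\dots,a_d)$; $\pi$ projects $\mathbb F_q^{d+1}$ onto the first $d$ coordinates; $\pi^V_\downarrow(w)=\pi(w)+\sigma(V)$ for $w\in V$. Shifted projection protocol (tokens: maps $\Omega\to\mathbb F_q^{d+1}$ and subsets of $\mathbb F_q^d$; runs are finite token sequences, $\rho*a$ appends $a$): the maximal executions for deal $H$ are $(H,f,X_1,\dots,X_m)$ with $f:\Omega\to\mathbb F_q^{d+1}$ a bijection such that $V=\mathbb F_q^{d+1}\setminus f[H_A]$ is a transversal hyperplane and $X_k=\pi^V_\downarrow[f[H_{B_k}]]$ for each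 $k$. $\Pi(H,\rho)$ is the set of tokens $a$ such that $(H,\rho*a)$ is an initial segment of a maximal execution. An execution is $(H,a_0,\dots,a_n)$ with $a_k\in\Pi(H,a_0,\dots,a_{k-1})$ for all $k$; it is terminal if $\Pi(H,\rho)=\emptyset$. *)

From HB Require Import structures.
From mathcomp Require Import all_boot all_order all_algebra all_field.
Set Implicit Arguments. Unset Strict Implicit. Unset Printing Implicit Defensive.
Import GRing.Theory.
Local Open Scope ring_scope.

(* Agents: [None] is A, [Some k] (k : 'I_m) is B_{k+1}.
   Speaking order A, B_1, ..., B_m. *)
Definition agent (m : nat) := option 'I_m.

Section ShiftedProjection.
Variables (F : finFieldType) (d m : nat) (Omega : finType).

Definition vecd1 := 'rV[F]_(d.+1).
Definition vecd := 'rV[F]_d.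

Definition proj (x : 'rV[F]_(d.+1)) : 'rV[F]_d :=
  \row_(i < d) x 0 (widen_ord (leqnSn d) i).

Definition hyperplane (a : 'rV[F]_d) (b : F) : {set 'rV[F]_(d.+1)} :=
  [set x : 'rV[F]_(d.+1) |
     x 0 ord_max == \sum_(i < d) a 0 i * x 0 (widen_ord (leqnSn d) i) + b].

Definition is_deal (tau : agent m -> nat) (H : {ffun agent m -> {set Omega}}) : Prop :=
  [/\ forall P, #|H P| = tau P,
      forall P Q, P != Q -> [disjoint H P & H Q]
    & forall c : Omega, exists P, c \in H P].

Inductive token :=
  | TMap of {ffun Omega -> 'rV[F]_(d.+1)}
  | TSet of {set 'rV[F]_d}.

Definition run := seq token.

(* maximal executions (H, f, X_1, ..., X_m): V = F^{d+1} \ f[H_A] is the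
   transversal hyperplane with coefficients (a, b), so sigma(V) = a, and
   X_k = pi_down^V [f[H_{B_k}]] = { pi(w) + a | w in f[H_{B_k}] }. *)
Definition maximal_run (H : {ffun agent m -> {set Omega}}) (r : run) : Prop :=
  exists (f : {ffun Omega -> 'rV[F]_(d.+1)}) (a : 'rV[F]_d) (b : F),
    [/\ bijective f,
        ~: (f @: H None) = hyperplane a b
      & r = TMap f :: [seq TSet [set proj (f c) + a | c in H (Some k)]
                      | k <- enum 'I_m]].

Definition Pi (H : {ffun agent m -> {set Omega}}) (rho : run) (a : token) : Prop :=
  exists s : run, maximal_run H (rcons rho a ++ s).

Definition is_execution (tau : agent m -> nat)
    (H : {ffun agent m -> {set Omega}}) (rho : run) : Prop :=
  is_deal tau H /\
  forall k, (k < size rho)%N -> Pi H (take k rho) (nth (TSet set0) rho k).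

Definition is_terminal (H : {ffun agent m -> {set Omega}}) (rho : run) : Prop :=
  forall a, ~ Pi H rho a.

Definition informative (tau : agent m -> nat) : Prop :=
  forall (H : {ffun agent m -> {set Omega}}) (rho : run),
    is_execution tau H rho -> is_terminal H rho ->
    forall (P : agent m) (H' : {ffun agent m -> {set Omega}}),
      is_execution tau H' rho -> H' P = H P -> H' = H.

End ShiftedProjection.

Definition suitable (F : finFieldType) (m d : nat) (Omega : finType)
    (tau : agent m -> nat) : Prop :=
  let q := #|F| in
  [/\ (1 < m)%N /\ (m < q)%N /\ (0 < d)%N,
      forall P, (0 < tau P)%N,
      (\sum_(P : agent m) tau P)%N = (q ^ d.+1)%N /\ #|Omega| = (q ^ d.+1)%N,
      tau None = (q ^ d.+1 - q ^ d)%N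
    & forall k : 'I_m, (q ^ d.-1 < tau (Some k))%N].

From mathcomp Require Import all_boot all_order all_algebra all_field.
Set Implicit Arguments. Unset Strict Implicit. Unset Printing Implicit Defensive.
Import GRing.Theory.
Local Open Scope ring_scope.

(* A terminal execution is a maximal execution (H, f, X_1, ..., X_m), and a
   deal H' with an execution along the same run shares f and the sets X_k.
   Since pi is injective on a transversal hyperplane V, the hyperplane
   V = F^(d+1) \ f[H_A] and its slope sigma(V) recover every H_{B_k} from X_k,
   so H'_A = H_A forces H' = H.  If instead H'_{B_j} = H_{B_j}, then f[H_{B_j}]
   lies in both V and V'; transversal hyperplanes with different slopes meet in
   only q^(d-1) points, fewer than |H_{B_j}|, so V and V' are parallel, share a
   point, hence coincide, and again H'_A = H_A. *)

Section Hyperplanes.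
Variables (F : finFieldType) (d : nat).
Local Notation pi := (@proj F d).
Implicit Types (a c y z : 'rV[F]_d) (x : 'rV[F]_d.+1) (b t : F).

Definition dotr a y : F := \sum_(i < d) a 0 i * y 0 i.

Lemma dotrDr c y z : dotr c (y + z) = dotr c y + dotr c z.
Proof. by rewrite /dotr -big_split; apply: eq_bigr => i _; rewrite mxE mulrDr. Qed.

Lemma dotrZr c t y : dotr c (t *: y) = t * dotr c y.
Proof. by rewrite /dotr mulr_sumr; apply: eq_bigr => i _; rewrite mxE mulrCA. Qed.

Lemma dotr0r c : dotr c 0 = 0.
Proof. by rewrite -(scale0r 0) dotrZr mul0r. Qed.

Lemma dotrBl a a' y : dotr (a - a') y = dotr a y - dotr a' y.
Proof. by rewrite /dotr -sumrB; apply: eq_bigr => i _; rewrite !mxE mulrBl. Qed.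

Lemma dotr_delta a i : dotr a (delta_mx 0 i) = a 0 i.
Proof.
rewrite /dotr (bigD1 i) //= big1 ?addr0 => [|j /negbTE ji]; first by rewrite mxE !eqxx mulr1.
by rewrite mxE ji andbF mulr0.
Qed.

Definition extend_row y t : 'rV[F]_d.+1 :=
  \row_(j < d.+1) oapp (y 0) t (unlift ord_max j).

Lemma unlift_max_widen (i : 'I_d) : unlift ord_max (widen_ord (leqnSn d) i) = Some i.
Proof.
have -> : widen_ord (leqnSn d) i = lift ord_max i by apply: val_inj; exact: (esym (lift_max i)).
by rewrite liftK.
Qed.

Lemma extend_row_max y t : extend_row y t 0 ord_max = t.
Proof. by rewrite mxE unlift_none. Qed.

Lemma proj_extend_row y t : pi (extend_row y t) = y.
Proof. by apply/rowP => i; rewrite !mxE unlift_max_widen. Qed.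

Lemma eq_row_proj_max x x' : pi x = pi x' -> x 0 ord_max = x' 0 ord_max -> x = x'.
Proof.
move=> eq_proj eq_max; apply/rowP => j; case: (ltnP j d) => [jd | dj].
  have -> : j = widen_ord (leqnSn d) (Ordinal jd) by apply: val_inj.
  by have /rowP/(_ (Ordinal jd)) := eq_proj; rewrite !mxE.
suff -> : j = ord_max by [].
by apply: val_inj; apply/eqP; rewrite eqn_leq dj -ltnS ltn_ord.
Qed.

Lemma mem_hyperplane x a b : (x \in hyperplane a b) = (x 0 ord_max == dotr a (pi x) + b).
Proof. by rewrite inE /dotr; under [in RHS]eq_bigr => i _ do rewrite mxE. Qed.

Lemma extend_row_in_hyperplane y a b : extend_row y (dotr a y + b) \in hyperplane a b.
Proof. by rewrite mem_hyperplane proj_extend_row extend_row_max. Qed.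

Lemma proj_hyperplane_inj a b : {in hyperplane a b &, injective pi}.
Proof.
move=> x x'; rewrite !mem_hyperplane => /eqP x_max /eqP x'_max eq_proj.
by apply: eq_row_proj_max; rewrite // x_max x'_max eq_proj.
Qed.

Lemma hyperplane_offset_inj x a b b' :
  x \in hyperplane a b -> x \in hyperplane a b' -> b = b'.
Proof. by rewrite !mem_hyperplane => /eqP -> /eqP /addrI. Qed.

Lemma hyperplane_inj a b a' b' : hyperplane a b = hyperplane a' b' -> a = a' /\ b = b'.
Proof.
move=> eqV.
have eq_val y : dotr a y + b = dotr a' y + b'.
  by have := extend_row_in_hyperplane y a b; rewrite eqV mem_hyperplane
    proj_extend_row extend_row_max => /eqP.
have eq_b : b = b' by have := eq_val 0; rewrite !dotr0r !add0r.
split=> //; apply/rowP => i.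
by have := eq_val (delta_mx 0 i); rewrite eq_b !dotr_delta => /addIr.
Qed.

Lemma card_hyperplane a b : #|hyperplane a b| = (#|F| ^ d)%N.
Proof.
have onto : pi @: hyperplane a b = [set: 'rV[F]_d].
  apply/setP => y; rewrite inE; apply/imsetP.
  by exists (extend_row y (dotr a y + b)); rewrite ?extend_row_in_hyperplane ?proj_extend_row.
by rewrite -(card_in_imset (proj_hyperplane_inj (a := a) (b := b))) onto cardsT card_mx mul1n.
Qed.

(* Each line [y + F u] with [dotr c u = 1] meets [dotr c y = e] exactly once. *)
Lemma card_dotr_eq c e : c != 0 -> (#|[set y | dotr c y == e]| * #|F| <= #|F| ^ d)%N.
Proof.
move=> c_neq0; have [i ci_neq0] : exists i, c 0 i != 0.
  apply/existsP; apply: contraR c_neq0 => /existsPn c0.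
  by apply/eqP/rowP => i; rewrite mxE; apply/eqP/negPn.
have [u cu] : exists u, dotr c u = 1.
  by exists ((c 0 i)^-1 *: delta_mx 0 i); rewrite dotrZr dotr_delta mulVf.
have card_rows : #|[set: 'rV[F]_d]| = (#|F| ^ d)%N by rewrite cardsT card_mx mul1n.
rewrite -card_rows -cardsT -cardsX.
rewrite -(@card_in_imset _ _ (fun p => p.1 + p.2 *: u)); first exact: subset_leq_card.
move=> [y t] [y' t'] /setXP [+ _] /setXP [+ _] /=; rewrite !inE => /eqP cy /eqP cy' eq_yt.
have eq_t : t = t'.
  by have := congr1 (dotr c) eq_yt; rewrite !dotrDr !dotrZr cu !mulr1 cy cy' => /addrI.
by move: eq_yt; rewrite eq_t => /addIr ->.
Qed.

Lemma card_hyperplaneI a b a' b' : a != a' ->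
  (#|hyperplane a b :&: hyperplane a' b'| * #|F| <= #|F| ^ d)%N.
Proof.
rewrite -subr_eq0 => /(card_dotr_eq (b' - b)); apply: leq_trans; rewrite leq_mul2r.
apply/orP; right; rewrite -(card_in_imset (f := pi)); last first.
  by move=> x x' /setIP [xV _] /setIP [x'V _]; exact: proj_hyperplane_inj xV x'V.
apply: subset_leq_card; apply/subsetP => _ /imsetP [x /setIP [] /[!mem_hyperplane] /eqP xV /eqP xV' ->].
rewrite inE dotrBl; apply/eqP; apply: (addIr (dotr a' (pi x) + b)).
by rewrite addrA subrK -xV xV' addrCA subrK.
Qed.

End Hyperplanes.

Lemma exists_bij_imset (T U : finType) (u0 : U) (A : {set T}) (W : {set U}) :
  #|T| = #|U| -> #|A| = #|W| -> exists2 f : {ffun T -> U}, bijective f & f @: A = W.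
Proof.
move=> card_TU card_AW.
pose s := enum A ++ enum (~: A); pose s' := enum W ++ enum (~: W).
have size_s : size s = #|T| by rewrite size_cat -!cardE cardsC.
have size_s' : size s' = #|U| by rewrite size_cat -!cardE cardsC.
have s'_uniq : uniq s'.
  by rewrite cat_uniq !enum_uniq andbT; apply/hasPn => u; rewrite !mem_enum inE => /negPf ->.
have mem_s c : c \in s by rewrite mem_cat !mem_enum inE orbN.
pose f := [ffun c => nth u0 s' (index c s)].
have f_inj : injective f.
  move=> c1 c2; rewrite !ffunE => /eqP; rewrite nth_uniq ?size_s' -?card_TU -?size_s ?index_mem //.
  by move/eqP; apply: index_inj.
have fA c : c \in A -> f c \in W.
  move=> cA; have idx_lt : (index c (enum A) < #|W|)%N.
    by rewrite -card_AW cardE index_mem mem_enum.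
  by rewrite ffunE index_cat mem_enum cA nth_cat -cardE idx_lt -mem_enum mem_nth // -cardE.
exists f; first by apply: (inj_card_bij f_inj); rewrite card_TU.
apply/eqP; rewrite eqEcard card_imset // card_AW leqnn andbT.
by apply/subsetP => _ /imsetP [c cA ->]; exact: fA.
Qed.

Section DealsFromProjections.
Variables (F : finFieldType) (d m : nat) (Omega : finType).
Variable f : {ffun Omega -> 'rV[F]_d.+1}.
Hypothesis f_inj : injective f.
Local Notation pi := (@proj F d).
Implicit Types (H : {ffun agent m -> {set Omega}}) (a : 'rV[F]_d) (b : F).

Definition hands_disjoint H := forall P Q, P != Q -> [disjoint H P & H Q].

Definition shifted_hand H a k := [set pi (f c) + a | c in H (Some k)].

Lemma mem_hyperplane_notin H a b c : ~: (f @: H None) = hyperplane a b ->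
  (f c \in hyperplane a b) = (c \notin H None).
Proof. by move=> <-; rewrite inE mem_imset. Qed.

Lemma hand_in_hyperplane H a b k c : hands_disjoint H ->
  ~: (f @: H None) = hyperplane a b -> c \in H (Some k) -> f c \in hyperplane a b.
Proof.
move=> disjH eqV cH; rewrite (mem_hyperplane_notin _ eqV).
by rewrite (disjointFr (disjH (Some k) None isT) cH).
Qed.

Lemma shifted_handK H a b k : hands_disjoint H -> ~: (f @: H None) = hyperplane a b ->
  H (Some k) = [set c | (c \notin H None) && (pi (f c) + a \in shifted_hand H a k)].
Proof.
move=> disjH eqV; apply/setP => c; rewrite inE; apply/idP/andP => [cH | [cA]].
  by rewrite (disjointFr (disjH (Some k) None isT) cH); split=> //; apply/imsetP; exists c.
case/imsetP => c' c'H /addIr eq_pi.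
rewrite -(mem_hyperplane_notin _ eqV) in cA.
by rewrite (f_inj (proj_hyperplane_inj cA (hand_in_hyperplane disjH eqV c'H) eq_pi)).
Qed.

Section TwoDeals.
Variables (H H' : {ffun agent m -> {set Omega}}) (a a' : 'rV[F]_d) (b b' : F).
Hypotheses (disjH : hands_disjoint H) (disjH' : hands_disjoint H').
Hypotheses (eqV : ~: (f @: H None) = hyperplane a b)
           (eqV' : ~: (f @: H' None) = hyperplane a' b').
Hypothesis eq_shifted : forall k, shifted_hand H a k = shifted_hand H' a' k.

Lemma eq_deals_of_eq_first_hand : H' None = H None -> H' = H.
Proof.
move=> eqA; have [eq_a eq_b] : a = a' /\ b = b' by apply: hyperplane_inj; rewrite -eqV -eqV' eqA.
subst a' b'; apply/ffunP => -[k|] //.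
by rewrite (shifted_handK _ disjH eqV) (shifted_handK _ disjH' eqV') eqA eq_shifted.
Qed.

Lemma eq_first_hands_of_eq_hand j : (0 < d)%N -> (#|F| ^ d.-1 < #|H (Some j)|)%N ->
  H' (Some j) = H (Some j) -> H' None = H None.
Proof.
move=> d_gt0 large_j eq_j.
have in_both c : c \in H (Some j) -> f c \in hyperplane a b :&: hyperplane a' b'.
  move=> cj; rewrite inE (hand_in_hyperplane disjH eqV cj).
  by rewrite (hand_in_hyperplane (k := j) disjH' eqV') // eq_j.
have eq_a : a = a'.
  apply: contraTeq large_j => /(card_hyperplaneI b b'); rewrite -leqNgt => card_I.
  rewrite -(leq_pmul2r (ltnW (card_finNzRing_gt1 F))) -expnSr prednK //.
  apply: leq_trans card_I; rewrite leq_mul2r -(card_imset _ f_inj); apply/orP; right.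
  by apply: subset_leq_card; apply/subsetP => _ /imsetP [c cj ->]; exact: in_both.
subst a'; have [c cj] : exists c, c \in H (Some j).
  by apply/set0Pn; rewrite -card_gt0; apply: leq_ltn_trans large_j.
have /setIP [cV cV'] := in_both c cj.
have eq_b := hyperplane_offset_inj cV cV'; subst b'.
by apply: (imset_inj f_inj); apply: setC_inj; rewrite eqV eqV'.
Qed.

Lemma eq_deals_of_eq_hand P : (0 < d)%N -> (forall k, #|F| ^ d.-1 < #|H (Some k)|)%N ->
  H' P = H P -> H' = H.
Proof.
move=> d_gt0 large; case: P => [j|] eq_hand; last exact: eq_deals_of_eq_first_hand.
exact/eq_deals_of_eq_first_hand/(eq_first_hands_of_eq_hand d_gt0 (large j) eq_hand).
Qed.

End TwoDeals.
End DealsFromProjections.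

Section Runs.
Variables (F : finFieldType) (d m : nat) (Omega : finType).
Implicit Types (H : {ffun agent m -> {set Omega}}) (rho r s : run F d Omega).

Lemma size_maximal_run H rho : maximal_run H rho -> size rho = m.+1.
Proof. by case=> f [a [b [_ _ ->]]]; rewrite /= size_map size_enum_ord. Qed.

Lemma maximal_run_exists tau H : is_deal tau H -> #|Omega| = (#|F| ^ d.+1)%N ->
  tau None = (#|F| ^ d.+1 - #|F| ^ d)%N -> exists rho, maximal_run H rho.
Proof.
case=> card_H _ _ card_Omega card_A.
have card_rows n : #|'rV[F]_n| = (#|F| ^ n)%N by rewrite card_mx mul1n.
have card_offV : #|H None| = #|~: hyperplane (0 : 'rV[F]_d) 0|.
  apply/eqP; rewrite -(eqn_add2l #|hyperplane (0 : 'rV[F]_d) 0|) cardsC card_hyperplane.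
  by rewrite card_H card_A card_rows subnKC // leq_exp2l ?card_finNzRing_gt1.
have [f f_bij f_A] := exists_bij_imset 0 (etrans card_Omega (esym (card_rows _))) card_offV.
by eexists; exists f, 0, 0; split; rewrite ?f_A ?setCK.
Qed.

Lemma execution_extends tau H rho : is_execution tau H rho -> (0 < size rho)%N ->
  exists s, maximal_run H (rho ++ s).
Proof.
case=> _; elim/last_ind: rho => // rho t _ exH _.
have [|s max_s] := exH (size rho); first by rewrite size_rcons.
rewrite nth_rcons ltnn eqxx -!cats1 take_size_cat // in max_s.
by exists s; rewrite -cats1.
Qed.

Lemma terminal_execution_maximal tau H rho : is_execution tau H rho -> is_terminal H rho ->
  (exists r, maximal_run H r) -> maximal_run H rho.
Proof.
move=> exH term [r max_r]; case: (posnP (size rho)) => [/size0nil rho0 | rho_gt0].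
  subst rho; case: r max_r => [/size_maximal_run // | t s max_r].
  by case: (term t); exists s.
have [[|t s] max_s] := execution_extends exH rho_gt0; first by rewrite cats0 in max_s.
by case: (term t); exists s; rewrite cat_rcons.
Qed.

Lemma maximal_run_execution tau H H' rho :
  maximal_run H rho -> is_execution tau H' rho -> maximal_run H' rho.
Proof.
move=> max_rho exH'; have [|s max_s] := execution_extends exH'.
  by rewrite (size_maximal_run max_rho).
move: (size_maximal_run max_s); rewrite size_cat (size_maximal_run max_rho) -[RHS]addn0.
by move=> /addnI /size0nil s0; rewrite s0 cats0 in max_s.
Qed.

Lemma maximal_runs_eq_deals H H' rho P : (0 < d)%N ->
  hands_disjoint H -> hands_disjoint H' -> (forall k, #|F| ^ d.-1 < #|H (Some k)|)%N ->
  maximal_run H rho -> maximal_run H' rho -> H' P = H P -> H' = H.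
Proof.
move=> d_gt0 disjH disjH' large [f [a [b [f_bij eqV ->]]]] [f' [a' [b' [_ eqV' []]]]].
move=> eq_f /(eq_in_map _ _ _).2 eq_shifted; subst f'.
apply: (eq_deals_of_eq_hand (bij_inj f_bij) disjH disjH' eqV eqV' _ d_gt0 large) => k.
by case: (eq_shifted k (mem_enum _ k)).
Qed.

End Runs.

Theorem mainTheorem9 (F : finFieldType) (m d : nat) (Omega : finType)
    (tau : agent m -> nat) :
  suitable F d Omega tau -> informative F d Omega tau.
Proof.
move=> [[_ [_ d_gt0]] _ [_ card_Omega] card_A large] H rho exH term P H' exH' eq_P.
have [[card_H disjH _] _] := exH; have [[_ disjH' _] _] := exH'.
have max_H := terminal_execution_maximal exH term (maximal_run_exists exH.1 card_Omega card_A).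
apply: (maximal_runs_eq_deals d_gt0 disjH disjH' _ max_H (maximal_run_execution max_H exH') eq_P).
by move=> k; rewrite card_H.
Qed.
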